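(* Let $G$ be the $2$-coloured collection consisting of the eight arity-$2$ elements $(c;d_1d_2)$, $c,d_1,d_2\in\{1,2\}$, of $\mathrm{Bulle}$, with their colours. Then $\mathrm{Bulle}$ admits the presentation $(G,\leftrightarrow)$, where $\leftrightarrow$ is the following equivalence relation on coloured syntax trees of degree $2$ on $G$. For each $(c;d_1d_2d_3)$ with $c,d_1,d_2,d_3\in\{1,2\}$, the four trees $$\mathfrak c(c;e\,d_3)\circ_1\mathfrak c(e;d_1d_2)\quad\text{and}\quad\mathfrak c(c;d_1e)\circ_2\mathfrak c(e;d_2d_3),\qquad e\in\{1,2\},$$ are pairwise equivalent. This gives sixteen classes, of four trees each, and these are all the nontrivial relations. That is, two degree-$2$ trees are related iff they evaluate to the same element of $\mathrm{Bulle}$. Consequently, $\mathrm{Bulle}$ is isomorphic to $\mathcal F(G)/\!\equiv$, where $\equiv$ is the smallest coloured operadic congruence containing $\leftrightarrow$, via the morphism sending $\mathfrak c(g)$ to $g$.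
   Context: The $2$-coloured operad $\mathrm{Bulle}$ has as elements of arity $n\ge2$ (bubbles) the pairs $(c;d_1\cdots d_n)$ with $c,d_i\in\{1,2\}$, with output colour $c$ and $i$th input colour $d_i$. It also has two units $\mathbf 1_1,\mathbf 1_2$, with $\mathbf 1_c$ of output and input colour $c$. Its composition $(c;d_1\cdots d_n)\circ_i(e;f_1\cdots f_m)$ is defined iff $d_i=e$, and equals $(c;d_1\cdots d_{i-1}f_1\cdots f_md_{i+1}\cdots d_n)$. Geometrically, a bubble is a polygon with $n+1$ vertices whose base and edges are each blue or uncoloured, with no coloured diagonals: the output colour is $1$ iff the base is blue, and the $i$th input colour is $2$ iff the $i$th edge is blue. For a $2$-coloured collection $G$ (elements of arity $\ge2$ with output and input colours), $\mathcal F(G)$ is the free $2$-coloured operad: coloured syntax trees (planar rooted trees with nodes of arity $\ell$ labelled by elements of $G(\ell)$, such that the $i$th child of a node labelled $x$, if internal with label $y$, satisfies $\mathrm{In}_i(x)=\mathrm{Out}(y)$), composed by grafting. Here $\mathfrak c(x)$ is the corolla labelled $x$, the degree of a tree is its number of internal nodes, and $\mathfrak c(x)\circ_i\mathfrak c(y)$ is the tree obtained by grafting the corolla of $y$ on the $i$th leaf of the corolla of $x$. A presentation $(G,\leftrightarrow)$ of a coloured operad $\mathcal C$ means that $\mathcal C\cong\mathcal F(G)/\!\equiv$ with $\equiv$ the smallest coloured operadic congruence containing $\leftrightarrow$. *)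

From mathcomp Require Import all_boot.

Set Implicit Arguments.
Unset Strict Implicit.
Unset Printing Implicit Defensive.

Inductive colour : Type := C1 | C2.

(* An element is a pair (c, s) = (c; d_1 ... d_n): output colour c,    *)
(* input colours s.  Bubbles are those with n >= 2; the unit 1_c is    *)
(* (c; c).                                                             *)
Definition bulle_elt := (colour * seq colour)%type.

Definition is_bulle (x : bulle_elt) : Prop :=
  2 <= size x.2 \/ x.2 = [:: x.1].

Definition bunit (c : colour) : bulle_elt := (c, [:: c]).

(* Partial composition x o_{i+1} y (indices are 0-based here: position i
   means the (i+1)-th input).  It is defined iff i < size x.2 and the
   i-th input colour of x equals the output colour of y. *)
Definition bcomp_defined (x : bulle_elt) (i : nat) (y : bulle_elt) : Prop :=
  i < size x.2 /\ nth C1 x.2 i = y.1.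

Definition bcomp (x : bulle_elt) (i : nat) (y : bulle_elt) : bulle_elt :=
  (x.1, take i x.2 ++ y.2 ++ drop i.+1 x.2).

(* Leaf d is a leaf of colour d (a lone leaf is the unit tree of colour *)
(* d); Node c d1 d2 l r is a node labelled (c; d1 d2) with children l r.*)
Inductive tree : Type :=
| Leaf (d : colour)
| Node (c d1 d2 : colour) (l r : tree).

Definition out (t : tree) : colour :=
  match t with Leaf d => d | Node c _ _ _ _ => c end.

Fixpoint wf (t : tree) : Prop :=
  match t with
  | Leaf _ => True
  | Node _ d1 d2 l r => wf l /\ wf r /\ out l = d1 /\ out r = d2
  end.

Fixpoint leaves (t : tree) : seq colour :=
  match t with
  | Leaf d => [:: d]
  | Node _ _ _ l r => leaves l ++ leaves r
  end.

Fixpoint degree (t : tree) : nat :=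
  match t with
  | Leaf _ => 0
  | Node _ _ _ l r => (degree l + degree r).+1
  end.

(* grafting s on the i-th leaf (0-based) of t *)
Fixpoint graft (t : tree) (i : nat) (s : tree) : tree :=
  match t with
  | Leaf d => if i == 0 then s else Leaf d
  | Node c d1 d2 l r =>
      if i < size (leaves l) then Node c d1 d2 (graft l i s) r
      else Node c d1 d2 l (graft r (i - size (leaves l)) s)
  end.

Definition graft_defined (t : tree) (i : nat) (s : tree) : Prop :=
  i < size (leaves t) /\ nth C1 (leaves t) i = out s.

Definition corolla (c d1 d2 : colour) : tree :=
  Node c d1 d2 (Leaf d1) (Leaf d2).

Definition rel_class (c d1 d2 d3 : colour) (t : tree) : Prop :=
  exists e : colour,
    t = graft (corolla c e d3) 0 (corolla e d1 d2) \/
    t = graft (corolla c d1 e) 1 (corolla e d2 d3).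

Definition brel (t t' : tree) : Prop :=
  exists c d1 d2 d3 : colour, rel_class c d1 d2 d3 t /\ rel_class c d1 d2 d3 t'.

Inductive cong : tree -> tree -> Prop :=
| cong_base t t' : brel t t' -> cong t t'
| cong_refl t : wf t -> cong t t
| cong_sym t t' : cong t t' -> cong t' t
| cong_trans t t' t'' : cong t t' -> cong t' t'' -> cong t t''
| cong_graft t t' s s' i :
    cong t t' -> cong s s' -> graft_defined t i s ->
    cong (graft t i s) (graft t' i s').

Fixpoint ev (t : tree) : bulle_elt :=
  match t with
  | Leaf d => bunit d
  | Node c d1 d2 l r => bcomp (bcomp (c, [:: d1; d2]) 1 (ev r)) 0 (ev l)
  end.

From mathcomp Require Import all_boot.
From mathcomp Require Import zify.

Set Implicit Arguments.
Unset Strict Implicit.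
Unset Printing Implicit Defensive.

(* A tree evaluates to its output colour together with its word of leaf
   colours, so grafting corresponds to substitution of words.  The relation
   <-> grafted with arbitrary subtrees rotates an internal edge and recolours
   it freely; these moves bring every tree to the right comb with the same
   output and leaves, so trees with equal evaluations are congruent. *)

Lemma evE t : ev t = (out t, leaves t).
Proof.
elim: t => [d|c d1 d2 l IHl r IHr] //=.
by rewrite IHl IHr /bcomp /= drop0 cats0.
Qed.

Lemma size_leaves_gt0 t : 0 < size (leaves t).
Proof. by elim: t => [d|c d1 d2 l IHl r IHr] //=; rewrite size_cat addn_gt0 IHl. Qed.

Lemma ev_is_bulle t : is_bulle (ev t).
Proof.
rewrite evE /is_bulle; case: t => [d|c d1 d2 l r] /=; first by right.
by left; rewrite size_cat; have := size_leaves_gt0 l; have := size_leaves_gt0 r; lia.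
Qed.

Lemma leaves_graft t i s : i < size (leaves t) ->
  leaves (graft t i s) = take i (leaves t) ++ leaves s ++ drop i.+1 (leaves t).
Proof.
elim: t i => [d|c d1 d2 l IHl r IHr] i /=; first by case: i => // _; rewrite cats0.
rewrite size_cat take_cat drop_cat => lt_i_lr; case: ltnP => [lt_il|le_li] /=.
  rewrite IHl // -!catA; case: ltnP => // le_l_i1.
  have -> : i.+1 = size (leaves l) by lia.
  by rewrite drop_size subnn drop0.
rewrite IHr; last by lia.
by rewrite ltnNge (leqW le_li) /= subSn // !catA.
Qed.

Lemma out_graft t i s : graft_defined t i s -> out (graft t i s) = out t.
Proof.
case: t => [d|c d1 d2 l r] /=; last by case: ifP.
by case: i => [|i] [] //= _ <-.
Qed.

Lemma graft_definedE t i s : graft_defined t i s <-> bcomp_defined (ev t) i (ev s).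
Proof. by rewrite !evE. Qed.

Lemma ev_graft t i s : graft_defined t i s -> ev (graft t i s) = bcomp (ev t) i (ev s).
Proof. by move=> def_tis; rewrite !evE out_graft // leaves_graft //; case: def_tis. Qed.

Lemma cong_ev t t' : cong t t' -> ev t = ev t'.
Proof.
elim=> {t t'} [t t' [c [d1 [d2 [d3 [[e1 t_cls] [e2 t'_cls]]]]]]|||
  |t t' s s' i _ ev_t _ ev_s def_tis].
- by rewrite !evE; case: t_cls => ->; case: t'_cls => ->.
- by [].
- by move=> t t' _ ->.
- by move=> t t' t'' _ -> _ ->.
- have def_t's' : graft_defined t' i s'.
    by apply/graft_definedE; rewrite -ev_t -ev_s -graft_definedE.
  by rewrite !ev_graft // ev_t ev_s.
Qed.

Lemma ev_rel_class c d1 d2 d3 t :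
  rel_class c d1 d2 d3 t -> ev t = (c, [:: d1; d2; d3]).
Proof. by case=> e [->|->]. Qed.

Lemma degree2_rel_class t : wf t -> degree t = 2 ->
  exists d1 d2 d3, rel_class (out t) d1 d2 d3 t.
Proof.
case: t => [d|c a b [dl|c1 a1 b1 l1 r1] [dr|c2 a2 b2 l2 r2]] //=; last by lia.
- case: l2 r2 => [x|?????] [y|?????] //=; try lia.
  move=> [_ [[_ [_ [<- <-]]] [<- <-]]] _.
  by exists dl, x, y, c2; right.
- case: l1 r1 => [x|?????] [y|?????] //=; try lia.
  move=> [[_ [_ [<- <-]]] [_ [<- <-]]] _.
  by exists x, y, dr, c1; left.
Qed.

Lemma wf_corolla c d1 d2 : wf (corolla c d1 d2).
Proof. by []. Qed.

Lemma cong_node c d1 d2 l l' r r' : cong l l' -> cong r r' ->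
  out l = d1 -> out r = d2 -> cong (Node c d1 d2 l r) (Node c d1 d2 l' r').
Proof.
move=> cong_l cong_r <- <-.
have cong_r1 := cong_graft (i := 1) (cong_refl (wf_corolla c (out l) (out r))) cong_r.
exact: (cong_graft (i := 0) (cong_r1 (conj erefl erefl)) cong_l (conj erefl erefl)).
Qed.

(* The defining relation is grafted with X, Y, Z from the right, so that the
   earlier leaf positions are not shifted. *)
Lemma cong_rotate c e e' X Y Z : wf X -> wf Y -> wf Z ->
  cong (Node c e (out Z) (Node e (out X) (out Y) X Y) Z)
       (Node c (out X) e' X (Node e' (out Y) (out Z) Y Z)).
Proof.
move=> wf_X wf_Y wf_Z.
have rel : cong (graft (corolla c e (out Z)) 0 (corolla e (out X) (out Y)))
                (graft (corolla c (out X) e') 1 (corolla e' (out Y) (out Z))).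
  apply: cong_base; exists c, (out X), (out Y), (out Z).
  by split; [exists e; left|exists e'; right].
have rel_Z := cong_graft (i := 2) rel (cong_refl wf_Z) (conj erefl erefl).
have rel_YZ := cong_graft (i := 1) rel_Z (cong_refl wf_Y) (conj erefl erefl).
exact: (cong_graft (i := 0) rel_YZ (cong_refl wf_X) (conj erefl erefl)).
Qed.

Lemma cong_recolour c e e' X Y Z : wf X -> wf Y -> wf Z ->
  cong (Node c (out X) e X (Node e (out Y) (out Z) Y Z))
       (Node c (out X) e' X (Node e' (out Y) (out Z) Y Z)).
Proof.
move=> wf_X wf_Y wf_Z.
exact: cong_trans (cong_sym (cong_rotate c C1 e wf_X wf_Y wf_Z))
                  (cong_rotate c C1 e' wf_X wf_Y wf_Z).
Qed.

(* Every internal node below the root is coloured by its leftmost leaf. *)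
Fixpoint comb (c d : colour) (s : seq colour) : tree :=
  if s is e :: s' then Node c d e (Leaf d) (comb e e s') else Leaf d.

Definition normal_form (x : bulle_elt) : tree :=
  if x.2 is d :: s then comb x.1 d s else Leaf x.1.

Lemma wf_comb c d s : wf (comb c d s).
Proof. by elim: s c d => [|e s IH] c d //=; case: s IH => [|? ?] IH. Qed.

Lemma wf_normal_form x : wf (normal_form x).
Proof. by rewrite /normal_form; case: x.2 => [|d s] //; apply: wf_comb. Qed.

Lemma out_comb_self e s : out (comb e e s) = e.
Proof. by case: s. Qed.

Lemma leaves_comb c d s : leaves (comb c d s) = d :: s.
Proof. by elim: s c d => //= e s IH c d; rewrite IH. Qed.

Lemma ev_normal_form x : is_bulle x -> ev (normal_form x) = x.
Proof.
case: x => c s [two_le|/= ->] //.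
by case: s two_le => [|d [|e s]] // _; rewrite /normal_form evE leaves_comb.
Qed.

Lemma out_normal_form x : is_bulle x -> out (normal_form x) = x.1.
Proof. by move/ev_normal_form/(congr1 fst); rewrite evE. Qed.

Lemma cong_node_comb c d1 d2 a s b s' :
  out (comb d1 a s) = d1 -> out (comb d2 b s') = d2 ->
  cong (Node c d1 d2 (comb d1 a s) (comb d2 b s')) (comb c a (s ++ b :: s')).
Proof.
elim: s c d1 a => [|e s IH] c d1 a /=.
  move=> <- {d1}; case: s' => [/= <-|f s' _]; first exact: cong_refl.
  by have := cong_recolour c d2 b (I : wf (Leaf a)) (I : wf (Leaf b)) (wf_comb f f s');
    rewrite /= out_comb_self.
move=> _ out_r.
have rot := cong_rotate c d1 e (I : wf (Leaf a)) (wf_comb e e s) (wf_comb d2 b s').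
rewrite /= out_comb_self out_r in rot.
apply: (cong_trans rot); apply: cong_node => //; first exact: cong_refl.
exact: IH (out_comb_self e s) out_r.
Qed.

Lemma cong_normal_form t : wf t -> cong t (normal_form (ev t)).
Proof.
elim: t => [d _|c d1 d2 l IHl r IHr [wf_l [wf_r [<- <-]]]]; first exact: cong_refl.
apply: (cong_trans (cong_node c (IHl wf_l) (IHr wf_r) erefl erefl)).
move: (out_normal_form (ev_is_bulle l)) (out_normal_form (ev_is_bulle r)).
rewrite !evE /=.
case: (leaves l) (size_leaves_gt0 l) => [|a s] // _.
case: (leaves r) (size_leaves_gt0 r) => [|b s'] // _.
exact: cong_node_comb.
Qed.

Theorem theorem2p5 :
  (* <-> relates exactly the degree-2 trees with the same evaluation *)
  (forall t t', wf t -> wf t' -> degree t = 2 -> degree t' = 2 ->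
     (brel t t' <-> ev t = ev t')) /\
  (* ev is a morphism of coloured operads F(G) -> Bulle *)
  (forall t, wf t -> is_bulle (ev t)) /\
  (forall t i s, wf t -> wf s -> graft_defined t i s ->
     bcomp_defined (ev t) i (ev s) /\ ev (graft t i s) = bcomp (ev t) i (ev s)) /\
  (* it is surjective *)
  (forall x, is_bulle x -> exists t, wf t /\ ev t = x) /\
  (* and its kernel is the congruence generated by <-> *)
  (forall t t', wf t -> wf t' -> (cong t t' <-> ev t = ev t')).
Proof.
split.
  move=> t t' wf_t wf_t' deg_t deg_t'; split=> [rel|ev_tt'].
    exact: cong_ev (cong_base rel).
  have [d1 [d2 [d3 cls_t]]] := degree2_rel_class wf_t deg_t.
  have [e1 [e2 [e3 cls_t']]] := degree2_rel_class wf_t' deg_t'.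
  have := ev_rel_class cls_t'.
  rewrite -ev_tt' (ev_rel_class cls_t) => -[out_t' e1E e2E e3E].
  rewrite -e1E -e2E -e3E -out_t' in cls_t'.
  by exists (out t), d1, d2, d3.
split; first by move=> t _; exact: ev_is_bulle.
split; first by move=> t i s _ _ def_tis; rewrite -graft_definedE ev_graft.
split.
  move=> x bulle_x; exists (normal_form x).
  by split; [apply: wf_normal_form|apply: ev_normal_form].
move=> t t' wf_t wf_t'; split=> [|ev_tt']; first exact: cong_ev.
by apply: cong_trans (cong_normal_form wf_t) _; rewrite ev_tt'; apply/cong_sym/cong_normal_form.
Qed.
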